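(* Let $(E\to M,\rho,\langle\cdot,\cdot\rangle,\circ)$ be a Courant algebroid and $(\mathbf I,\mathbf J,\mathbf K)$ an almost hypercomplex structure on $E$. There exists a hypercomplex connection $\nabla$ satisfying $\nabla\mathbf I=\nabla\mathbf J=\nabla\mathbf K=0$ and $$T(X,Y)=\mathbf ID\langle X,\mathbf IY\rangle+\mathbf JD\langle X,\mathbf JY\rangle+\mathbf KD\langle X,\mathbf KY\rangle\quad\text{for all }X,Y\in\Gamma(E)$$ if and only if $N_{\mathbf I,\mathbf J}=0$. In that case this connection coincides with each of the three hypercomplex connections $$\nabla_XY=-\tfrac12\mathbf K\big(\mathbf JY\circ\mathbf IX-\mathbf J(Y\circ\mathbf IX)-\mathbf I(\mathbf JY\circ X)+\mathbf J\mathbf I(Y\circ X)\big),$$ $$\nabla'_XY=-\tfrac12\mathbf I\big(\mathbf KY\circ\mathbf JX-\mathbf K(Y\circ\mathbf JX)-\mathbf J(\mathbf KY\circ X)+\mathbf K\mathbf J(Y\circ X)\big),$$ $$\nabla''_XY=-\tfrac12\mathbf J\big(\mathbf IY\circ\mathbf KX-\mathbf I(Y\circ\mathbf KX)-\mathbf K(\mathbf IY\circ X)+\mathbf I\mathbf K(Y\circ X)\big).$$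
   Context: A Courant algebroid $(E\to M,\rho,\langle\cdot,\cdot\rangle,\circ)$ consists of a real vector bundle $E\to M$ over a smooth manifold, a nondegenerate symmetric fiberwise bilinear pairing $\langle\cdot,\cdot\rangle$ on $E$, a vector bundle map $\rho:E\to TM$ (the anchor), and an $\mathbb R$-bilinear operation $\circ$ on $\Gamma(E)$ (the Dorfman bracket) such that for all $f\in C^\infty(M)$, $x,y,z\in\Gamma(E)$: $x\circ(y\circ z)=(x\circ y)\circ z+y\circ(x\circ z)$; $\rho(x\circ y)=[\rho(x),\rho(y)]$; $x\circ(fy)=(\rho(x)f)y+f(x\circ y)$; $x\circ y+y\circ x=2D\langle x,y\rangle$; $(Df)\circ x=0$; $\rho(x)\langle y,z\rangle=\langle x\circ y,z\rangle+\langle y,x\circ z\rangle$. Here $D:C^\infty(M)\to\Gamma(E)$ is the $\mathbb R$-linear map defined by $\langle Df,x\rangle=\tfrac12\rho(x)f$. The Courant bracket is $[\![x,y]\!]=\tfrac12(x\circ y-y\circ x)$. For vector bundle endomorphisms $F,G$ of $E$ (over $\mathrm{id}_M$), the Nijenhuis concomitant is the tensor $N_{F,G}:E\otimes E\to E$ given by $N_{F,G}(X,Y)=FX\circ GY-F(X\circ GY)-G(FX\circ Y)+FG(X\circ Y)+GX\circ FY-G(X\circ FY)-F(GX\circ Y)+GF(X\circ Y)$. An almost hypercomplex structure on $E$ is a triple $(\mathbf I,\mathbf J,\mathbf K)$ of vector bundle endomorphisms of $E$ over $\mathrm{id}_M$, each orthogonal for $\langle\cdot,\cdot\rangle$, with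 $\mathbf I^2=\mathbf J^2=\mathbf K^2=\mathbf I\mathbf J\mathbf K=-1$. Given an almost hypercomplex structure, for $f\in C^\infty(M)$ and $X,Y\in\Gamma(E)$ set $\Delta_f(X,Y)=\langle X,Y\rangle Df+\langle\mathbf IX,Y\rangle\mathbf I Df+\langle\mathbf JX,Y\rangle\mathbf JDf+\langle\mathbf KX,Y\rangle\mathbf KDf$. A hypercomplex connection is an $\mathbb R$-bilinear map $\Gamma(E)\times\Gamma(E)\to\Gamma(E)$, $(X,Y)\mapsto\nabla_XY$, with $\nabla_{fX}Y=f\nabla_XY$ and $\nabla_X(fY)=(\rho(X)f)Y+f\nabla_XY-\Delta_f(X,Y)$. Its torsion is $T(X,Y)=\nabla_XY-\nabla_YX-[\![X,Y]\!]$. For an endomorphism $P$ of $E$, $(\nabla_XP)Y:=\nabla_X(PY)-P(\nabla_XY)$, and $\nabla P=0$ means this vanishes for all $X,Y$. *)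

(* Algebraic rendering of Courant algebroids:
   K     = the ground field (R in the paper; any real field here),
   A     = C^oo(M), a commutative K-algebra,
   E     = Gamma(E), an A-module of sections.
   Vector fields are K-linear derivations of A; vector bundle endomorphisms
   over id_M are A-linear maps E -> E. *)
From HB Require Import structures.
From mathcomp Require Import all_boot all_order all_algebra.
Set Implicit Arguments. Unset Strict Implicit. Unset Printing Implicit Defensive.
Import Order.TTheory GRing.Theory Num.Theory.
Local Open Scope ring_scope.

Definition half (K : realFieldType) (A : comAlgType K) : A := (2%:R : K)^-1%:A.

Definition Klin (K : realFieldType) (A : comAlgType K) (E E' : lmodType A)
  (F : E -> E') : Prop :=
  (forall x y, F (x + y) = F x + F y) /\
  (forall (k : K) x, F (k%:A *: x) = k%:A *: F x).

(* vector bundle endomorphism over id_M = A-linear map on sections *)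
Definition Alin (K : realFieldType) (A : comAlgType K) (E : lmodType A)
  (F : E -> E) : Prop :=
  forall (f : A) x y, F (f *: x + y) = f *: F x + F y.

(* rho(x) is a vector field, i.e. a K-linear derivation of A *)
Definition is_derivation (K : realFieldType) (A : comAlgType K) (d : A -> A) : Prop :=
  (forall f g, d (f + g) = d f + d g) /\
  (forall (k : K) f, d (k *: f) = k *: d f) /\
  (forall f g, d (f * g) = d f * g + f * d g).

(* Courant algebroid data (pair, anchor, dorf) together with the operator D
   characterised by <Df, x> = 1/2 rho(x) f (unique by nondegeneracy). *)
Definition is_courant (K : realFieldType) (A : comAlgType K) (E : lmodType A)
  (pair : E -> E -> A) (anchor : E -> A -> A) (dorf : E -> E -> E)
  (D : A -> E) : Prop :=
  (forall (f : A) x y z, pair (f *: x + y) z = f * pair x z + pair y z) /\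
  (forall x y, pair x y = pair y x) /\
  (* (fiberwise) nondegenerate: musical map E -> E^* is bijective *)
  (forall x, (forall y, pair x y = 0) -> x = 0) /\
  (forall phi : E -> A, (forall (f : A) x y, phi (f *: x + y) = f * phi x + phi y) ->
     exists x, forall y, pair x y = phi y) /\
  (* anchor: vector bundle map E -> TM *)
  (forall (f : A) x y g, anchor (f *: x + y) g = f * anchor x g + anchor y g) /\
  (forall x, is_derivation (anchor x)) /\
  (forall x, Klin (dorf x)) /\
  (forall y, Klin (fun x => dorf x y)) /\
  (forall f x, pair (D f) x = half A * anchor x f) /\
  (forall x y z, dorf x (dorf y z) = dorf (dorf x y) z + dorf y (dorf x z)) /\
  (forall x y f, anchor (dorf x y) f = anchor x (anchor y f) - anchor y (anchor x f)) /\
  (forall x (f : A) y, dorf x (f *: y) = anchor x f *: y + f *: dorf x y) /\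
  (forall x y, dorf x y + dorf y x = (2%:R : A) *: D (pair x y)) /\
  (forall f x, dorf (D f) x = 0) /\
  (forall x y z, anchor x (pair y z) = pair (dorf x y) z + pair y (dorf x z)).

Definition courant_bracket (K : realFieldType) (A : comAlgType K) (E : lmodType A)
  (dorf : E -> E -> E) (x y : E) : E := half A *: (dorf x y - dorf y x).

Definition nijenhuis_concomitant (K : realFieldType) (A : comAlgType K) (E : lmodType A)
  (dorf : E -> E -> E) (F G : E -> E) (X Y : E) : E :=
  dorf (F X) (G Y) - F (dorf X (G Y)) - G (dorf (F X) Y) + F (G (dorf X Y))
  + dorf (G X) (F Y) - G (dorf X (F Y)) - F (dorf (G X) Y) + G (F (dorf X Y)).

Definition orthogonal (K : realFieldType) (A : comAlgType K) (E : lmodType A)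
  (pair : E -> E -> A) (F : E -> E) : Prop :=
  forall x y, pair (F x) (F y) = pair x y.

Definition almost_hypercomplex (K : realFieldType) (A : comAlgType K) (E : lmodType A)
  (pair : E -> E -> A) (I J Kk : E -> E) : Prop :=
  Alin I /\ Alin J /\ Alin Kk /\
  orthogonal pair I /\ orthogonal pair J /\ orthogonal pair Kk /\
  (forall x, I (I x) = - x) /\ (forall x, J (J x) = - x) /\
  (forall x, Kk (Kk x) = - x) /\ (forall x, I (J (Kk x)) = - x).

Definition Delta (K : realFieldType) (A : comAlgType K) (E : lmodType A)
  (pair : E -> E -> A) (D : A -> E) (I J Kk : E -> E) (f : A) (X Y : E) : E :=
  pair X Y *: D f + pair (I X) Y *: I (D f) + pair (J X) Y *: J (D f)
  + pair (Kk X) Y *: Kk (D f).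

Definition hypercomplex_connection (K : realFieldType) (A : comAlgType K)
  (E : lmodType A) (pair : E -> E -> A) (anchor : E -> A -> A) (D : A -> E)
  (I J Kk : E -> E) (nabla : E -> E -> E) : Prop :=
  (forall X, Klin (nabla X)) /\ (forall Y, Klin (fun X => nabla X Y)) /\
  (forall (f : A) X Y, nabla (f *: X) Y = f *: nabla X Y) /\
  (forall X (f : A) Y, nabla X (f *: Y) =
     anchor X f *: Y + f *: nabla X Y - Delta pair D I J Kk f X Y).

Definition torsion (K : realFieldType) (A : comAlgType K) (E : lmodType A)
  (dorf : E -> E -> E) (nabla : E -> E -> E) (X Y : E) : E :=
  nabla X Y - nabla Y X - courant_bracket dorf X Y.

Definition parallel (K : realFieldType) (A : comAlgType K) (E : lmodType A)
  (nabla : E -> E -> E) (P : E -> E) : Prop :=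
  forall X Y, nabla X (P Y) - P (nabla X Y) = 0.

Definition conn_formula (K : realFieldType) (A : comAlgType K) (E : lmodType A)
  (dorf : E -> E -> E) (P Q R : E -> E) (X Y : E) : E :=
  - half A *: R (dorf (Q Y) (P X) - Q (dorf Y (P X)) - P (dorf (Q Y) X)
                 + Q (P (dorf Y X))).

Definition good_connection (K : realFieldType) (A : comAlgType K) (E : lmodType A)
  (pair : E -> E -> A) (anchor : E -> A -> A) (dorf : E -> E -> E) (D : A -> E)
  (I J Kk : E -> E) (nabla : E -> E -> E) : Prop :=
  hypercomplex_connection pair anchor D I J Kk nabla /\
  parallel nabla I /\ parallel nabla J /\ parallel nabla Kk /\
  (forall X Y, torsion dorf nabla X Y =
     I (D (pair X (I Y))) + J (D (pair X (J Y))) + Kk (D (pair X (Kk Y)))).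

From Pilot Require Import Defs.
From HB Require Import structures.
From mathcomp Require Import all_boot all_order all_algebra.
Import Order.TTheory GRing.Theory Num.Theory.
Local Open Scope ring_scope.

Set Implicit Arguments. Unset Strict Implicit. Unset Printing Implicit Defensive.

(* For an almost hypercomplex triple (P, Q, R) write
     C_{P,Q}(X, Y) = QY o PX - Q(Y o PX) - P(QY o X) + QP(Y o X),
   so that the candidate connection is  nabla_X Y = -1/2 R C_{P,Q}(X, Y).
   The proof rests on three facts, proved for an arbitrary triple:
   1. (uniqueness) a connection with nabla P = nabla Q = 0 and the prescribed
      torsion equals -1/2 R C_{P,Q}: the torsion condition expresses the
      Dorfman bracket through nabla, and substituting this into C_{P,Q} gives
      C_{P,Q}(X, Y) = 2 R nabla_X Y;
   2. (torsion) R T(X, Y) for nabla = -1/2 R C_{P,Q} differs from R applied to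
      the prescribed torsion by -1/2 N_{P,Q}(X, Y);
   3. (existence) -1/2 R C_{P,Q} is always a hypercomplex connection, and when
      N_{P,Q} = C_{P,Q} + C_{Q,P} vanishes it is parallel for P, Q, R.
   The theorem follows from 1-3 for (I, J, K); the three formulas agree since
   (J, K, I) and (K, I, J) are almost hypercomplex with the same torsion. *)

(* Sums, opposites and zeros of opaque atoms
   are reified into [aterm], normalised to the sequence of integer
   coefficients of the atoms, and compared coefficientwise. *)
Inductive aterm := AAtom of nat | AAdd of aterm & aterm | AOpp of aterm | AZero.

Fixpoint aterm_eval (V : zmodType) (env : seq V) (e : aterm) : V :=
  match e with
  | AAtom i => nth 0 env i
  | AAdd a b => aterm_eval env a + aterm_eval env b
  | AOpp a => - aterm_eval env a
  | AZero => 0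
  end.

Fixpoint coeff_eval (V : zmodType) (env : seq V) (c : seq int) : V :=
  match env, c with
  | e :: env', a :: c' => e *~ a + coeff_eval env' c'
  | _, _ => 0
  end.

Fixpoint coeff_add (c d : seq int) : seq int :=
  match c, d with
  | a :: c', b :: d' => (a + b) :: coeff_add c' d'
  | [::], d => d
  | c, [::] => c
  end.

Definition coeff_opp (c : seq int) : seq int := map (fun x => - x) c.

Fixpoint aterm_coeffs (e : aterm) : seq int :=
  match e with
  | AAtom i => ncons i 0 [:: 1]
  | AAdd a b => coeff_add (aterm_coeffs a) (aterm_coeffs b)
  | AOpp a => coeff_opp (aterm_coeffs a)
  | AZero => [::]
  end.

Lemma coeff_eval_add (V : zmodType) (env : seq V) c d :
  coeff_eval env (coeff_add c d) = coeff_eval env c + coeff_eval env d.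
Proof.
elim: env c d => [|e env IH] [|a c] [|b d] //=; rewrite ?addr0 ?add0r //.
by rewrite IH mulrzDr addrACA.
Qed.

Lemma coeff_eval_opp (V : zmodType) (env : seq V) c :
  coeff_eval env (coeff_opp c) = - coeff_eval env c.
Proof.
elim: env c => [|e env IH] [|a c] //=; rewrite ?oppr0 //.
by rewrite IH mulrNz opprD.
Qed.

Lemma coeff_eval_atom (V : zmodType) (env : seq V) i :
  coeff_eval env (ncons i 0 [:: 1]) = nth 0 env i.
Proof.
elim: env i => [|e env IH] [|i] //=; first by case: env {IH} => [|? ?]; rewrite addr0.
by rewrite IH mulr0z add0r.
Qed.

Lemma aterm_coeffsE (V : zmodType) (env : seq V) e :
  aterm_eval env e = coeff_eval env (aterm_coeffs e).
Proof.
elim: e => [i|a IHa b IHb|a IHa|] /=.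
- by rewrite coeff_eval_atom.
- by rewrite coeff_eval_add IHa IHb.
- by rewrite coeff_eval_opp IHa.
- by case: env.
Qed.

Lemma coeff_eval_zero (V : zmodType) (env : seq V) c :
  all (fun x => x == 0) c -> coeff_eval env c = 0.
Proof.
elim: env c => [|e env IH] [|a c] //= /andP[/eqP -> H].
by rewrite mulr0z add0r IH.
Qed.

Lemma aterm_eq_sound (V : zmodType) (env : seq V) e1 e2 :
  all (fun x => x == 0) (coeff_add (aterm_coeffs e1) (coeff_opp (aterm_coeffs e2))) ->
  aterm_eval env e1 = aterm_eval env e2.
Proof.
move=> H; apply/eqP; rewrite -subr_eq0 !aterm_coeffsE -coeff_eval_opp -coeff_eval_add.
by rewrite coeff_eval_zero.
Qed.

Ltac aterm_find x ls k kfail :=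
  lazymatch ls with
  | nil => kfail tt
  | ?y :: ?ls' => tryif unify x y then k 0%N
                  else aterm_find x ls' ltac:(fun n => let m := constr:(S n) in k m) kfail
  end.

Ltac aterm_atoms t ls k :=
  lazymatch t with
  | @GRing.add _ ?a ?b => aterm_atoms a ls ltac:(fun l1 => aterm_atoms b l1 k)
  | @GRing.opp _ ?a => aterm_atoms a ls k
  | @GRing.zero _ => k ls
  | _ => aterm_find t ls ltac:(fun _ => k ls) ltac:(fun _ => let l' := constr:(t :: ls) in k l')
  end.

Ltac aterm_reify t ls k :=
  lazymatch t with
  | @GRing.add _ ?a ?b =>
      aterm_reify a ls ltac:(fun x => aterm_reify b ls ltac:(fun y =>
        let z := constr:(AAdd x y) in k z))
  | @GRing.opp _ ?a => aterm_reify a ls ltac:(fun x => let z := constr:(AOpp x) in k z)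
  | @GRing.zero _ => k constr:(AZero)
  | _ => aterm_find t ls ltac:(fun n => let z := constr:(AAtom n) in k z)
                         ltac:(fun _ => fail 100 "unregistered atom")
  end.

Ltac abelian :=
  lazymatch goal with
  | |- @eq ?T ?l ?r =>
    aterm_atoms l (@nil T) ltac:(fun l0 => aterm_atoms r l0 ltac:(fun ls =>
    aterm_reify l ls ltac:(fun el => aterm_reify r ls ltac:(fun er =>
    change (aterm_eval ls el = aterm_eval ls er); apply: aterm_eq_sound;
    vm_compute; reflexivity))))
  end.

Lemma additive_zero (U V : zmodType) (f : U -> V) : {morph f : x y / x + y} -> f 0 = 0.
Proof. by move=> fD; apply: (addrI (f 0)); rewrite -fD !addr0. Qed.

Lemma additive_opp (U V : zmodType) (f : U -> V) :
  {morph f : x y / x + y} -> {morph f : x / - x}.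
Proof. by move=> fD x; apply/eqP; rewrite -subr_eq0 opprK -fD addNr (additive_zero fD). Qed.

Section ModulesOverA.
Variables (K : realFieldType) (A : comAlgType K) (E : lmodType A).

Lemma Alin_add (S : E -> E) : Alin S -> {morph S : x y / x + y}.
Proof. by move=> SL x y; have := SL 1 x y; rewrite !scale1r. Qed.

Lemma Alin_opp (S : E -> E) : Alin S -> {morph S : x / - x}.
Proof. by move=> SL; apply/additive_opp/Alin_add. Qed.

Lemma Alin_scale (S : E -> E) :
  Alin S -> forall (f : A) x, S (f *: x) = f *: S x.
Proof.
move=> SL f x; have := SL f x 0; rewrite !addr0 => ->.
by rewrite (additive_zero (Alin_add SL)) addr0.
Qed.

Lemma half_double (v : E) : Defs.half A *: (v + v) = v.
Proof.
have halves : (2%:R : K)^-1 + (2%:R)^-1 = 1 by rewrite [RHS]splitr mul1r.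
by rewrite scalerDr -scalerDl /Defs.half -scalerDl halves !scale1r.
Qed.

Lemma half_scaleC (f : A) (v : E) : Defs.half A *: (f *: v) = f *: (Defs.half A *: v).
Proof. by rewrite !scalerA mulrC. Qed.

Definition mixed_bracket (dorf : E -> E -> E) (P Q : E -> E) (X Y : E) : E :=
  dorf (Q Y) (P X) - Q (dorf Y (P X)) - P (dorf (Q Y) X) + Q (P (dorf Y X)).

Lemma conn_formulaE (dorf : E -> E -> E) (P Q R : E -> E) X Y :
  conn_formula dorf P Q R X Y = - Defs.half A *: R (mixed_bracket dorf P Q X Y).
Proof. by []. Qed.

Lemma nijenhuis_mixed (dorf : E -> E -> E) (P Q : E -> E) X Y :
  nijenhuis_concomitant dorf P Q Y X =
  mixed_bracket dorf P Q X Y + mixed_bracket dorf Q P X Y.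
Proof. rewrite /nijenhuis_concomitant /mixed_bracket; abelian. Qed.

Definition torsion_target (pair : E -> E -> A) (D : A -> E) (P Q R : E -> E) (X Y : E) : E :=
  P (D (pair X (P Y))) + Q (D (pair X (Q Y))) + R (D (pair X (R Y))).

Lemma torsion_target_cycle (pair : E -> E -> A) (D : A -> E) (P Q R : E -> E) X Y :
  torsion_target pair D P Q R X Y = torsion_target pair D Q R P X Y.
Proof. rewrite /torsion_target; abelian. Qed.

Lemma parallel_commute (nabla : E -> E -> E) (P : E -> E) :
  parallel nabla P -> forall a b, nabla a (P b) = P (nabla a b).
Proof. by move=> parP a b; apply/eqP; rewrite -subr_eq0 parP. Qed.

Section CourantAlgebroid.
Variables (pair : E -> E -> A) (anchor : E -> A -> A) (dorf : E -> E -> E) (D : A -> E).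
Hypothesis HC : is_courant pair anchor dorf D.

Lemma pair_linear f x y z : pair (f *: x + y) z = f * pair x z + pair y z.
Proof. by case: HC => H _; exact: H. Qed.

Lemma pair_sym x y : pair x y = pair y x.
Proof. by case: HC => _ [H _]; exact: H. Qed.

Lemma pair_nondeg x : (forall y, pair x y = 0) -> x = 0.
Proof. by case: HC => _ [_ [H _]]; exact: H. Qed.

Lemma anchor_derivation x : is_derivation (anchor x).
Proof. by case: HC => _ [_ [_ [_ [_ [H _]]]]]; exact: H. Qed.

Lemma dorf_Klin_r x : Klin (dorf x).
Proof. by case: HC => _ [_ [_ [_ [_ [_ [H _]]]]]]; exact: H. Qed.

Lemma dorf_Klin_l y : Klin (dorf ^~ y).
Proof. by case: HC => _ [_ [_ [_ [_ [_ [_ [H _]]]]]]]; exact: H. Qed.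

Lemma pair_D f x : pair (D f) x = Defs.half A * anchor x f.
Proof. by case: HC => _ [_ [_ [_ [_ [_ [_ [_ [H _]]]]]]]]; exact: H. Qed.

Lemma dorf_leibniz x f y : dorf x (f *: y) = anchor x f *: y + f *: dorf x y.
Proof. by case: HC => _ [_ [_ [_ [_ [_ [_ [_ [_ [_ [_ [H _]]]]]]]]]]]; exact: H. Qed.

Lemma dorf_symmetric x y : dorf x y + dorf y x = 2%:R *: D (pair x y).
Proof. by case: HC => _ [_ [_ [_ [_ [_ [_ [_ [_ [_ [_ [_ [H _]]]]]]]]]]]]; exact: H. Qed.

Lemma pair_addl x y z : pair (x + y) z = pair x z + pair y z.
Proof. by rewrite -[x]scale1r pair_linear mul1r scale1r. Qed.

Lemma pair_oppl x z : pair (- x) z = - pair x z.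
Proof. exact: (@additive_opp _ _ (pair ^~ z) (fun x y => pair_addl x y z)). Qed.

Lemma pair_scalel f x z : pair (f *: x) z = f * pair x z.
Proof.
rewrite -[f *: x]addr0 pair_linear.
by rewrite (@additive_zero _ _ (pair ^~ z) (fun x y => pair_addl x y z)) addr0.
Qed.

Lemma pair_oppr x z : pair z (- x) = - pair z x.
Proof. by rewrite !(pair_sym z) pair_oppl. Qed.

Lemma pair_scaler f x z : pair z (f *: x) = f * pair z x.
Proof. by rewrite !(pair_sym z) pair_scalel. Qed.

Lemma anchor_add x f g : anchor x (f + g) = anchor x f + anchor x g.
Proof. by case: (anchor_derivation x). Qed.

Lemma anchor_mul x f g : anchor x (f * g) = anchor x f * g + f * anchor x g.
Proof. by case: (anchor_derivation x) => _ []. Qed.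

(* D is the differential: additive and satisfying the Leibniz rule, since
   <Df, x> = 1/2 rho(x) f and the pairing is nondegenerate. *)
Lemma D_add f g : D (f + g) = D f + D g.
Proof.
apply/eqP; rewrite -subr_eq0; apply/eqP; apply: pair_nondeg => y.
by rewrite pair_addl pair_oppl pair_addl !pair_D anchor_add mulrDr subrr.
Qed.

Lemma D_opp f : D (- f) = - D f.
Proof. exact: additive_opp D_add f. Qed.

Lemma D_mul f g : D (f * g) = f *: D g + g *: D f.
Proof.
apply/eqP; rewrite -subr_eq0; apply/eqP; apply: pair_nondeg => y.
rewrite pair_addl pair_oppl pair_addl !pair_scalel !pair_D anchor_mul mulrDr.
rewrite [anchor y f * g]mulrC (mulrCA f) (mulrCA g); abelian.
Qed.

Lemma dorf_addr x y z : dorf x (y + z) = dorf x y + dorf x z.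
Proof. by case: (dorf_Klin_r x). Qed.

Lemma dorf_addl x y z : dorf (x + y) z = dorf x z + dorf y z.
Proof. by case: (dorf_Klin_l z) => H _; exact: H. Qed.

Lemma dorf_oppl x y : dorf (- x) y = - dorf x y.
Proof. exact: (@additive_opp _ _ (dorf ^~ y) (fun a b => dorf_addl a b y)). Qed.

Lemma dorf_oppr x y : dorf x (- y) = - dorf x y.
Proof. exact: additive_opp (dorf_addr x) y. Qed.

Lemma dorf_scaler x (k : K) y : dorf x (k%:A *: y) = k%:A *: dorf x y.
Proof. by case: (dorf_Klin_r x). Qed.

Lemma dorf_scalel x (k : K) y : dorf (k%:A *: x) y = k%:A *: dorf x y.
Proof. by case: (dorf_Klin_l y) => _ H; exact: H. Qed.

Lemma dorf_swap x y : dorf y x = - dorf x y + (D (pair x y) + D (pair x y)).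
Proof. by have := dorf_symmetric x y; rewrite scaler_nat mulr2n => <-; rewrite addKr. Qed.

(* The Leibniz rule in the first argument, obtained by skew-symmetrising. *)
Lemma dorf_leibniz_l f y z :
  dorf (f *: y) z = f *: dorf y z - anchor z f *: y + (pair y z *: D f + pair y z *: D f).
Proof.
rewrite (dorf_swap z (f *: y)) dorf_leibniz (dorf_swap y z) pair_scaler (pair_sym z y) D_mul.
rewrite !scalerDr !scalerN; abelian.
Qed.

Lemma pair_skew (S : E -> E) :
  Defs.orthogonal pair S -> (forall x, S (S x) = - x) ->
  forall x y, pair (S x) y = - pair x (S y).
Proof. by move=> So SS x y; rewrite -(So x (S y)) SS pair_oppr opprK. Qed.

Lemma mixed_bracket_Sr (T S : E -> E) :
  Alin T -> Alin S -> (forall x, S (S x) = - x) ->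
  forall X Y, mixed_bracket dorf T S X (S Y) = - S (mixed_bracket dorf T S X Y).
Proof.
move=> TL SL SS X Y; rewrite /mixed_bracket.
do 3 rewrite ?SS ?dorf_oppl ?(Alin_opp TL) ?(Alin_add SL) ?(Alin_opp SL) ?opprK.
abelian.
Qed.

Section HypercomplexTriple.
Variables P Q R : E -> E.
Hypothesis HPQR : almost_hypercomplex pair P Q R.

Lemma P_lin : Alin P. Proof. by case: HPQR => H _; exact: H. Qed.
Lemma Q_lin : Alin Q. Proof. by case: HPQR => _ [H _]; exact: H. Qed.
Lemma R_lin : Alin R. Proof. by case: HPQR => _ [_ [H _]]; exact: H. Qed.
Lemma PP x : P (P x) = - x. Proof. by case: HPQR => _ [_ [_ [_ [_ [_ [H _]]]]]]; exact: H. Qed.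
Lemma QQ x : Q (Q x) = - x. Proof. by case: HPQR => _ [_ [_ [_ [_ [_ [_ [H _]]]]]]]; exact: H. Qed.
Lemma RR x : R (R x) = - x. Proof. by case: HPQR => _ [_ [_ [_ [_ [_ [_ [_ [H _]]]]]]]]; exact: H. Qed.

Lemma PQR x : P (Q (R x)) = - x.
Proof. by case: HPQR => _ [_ [_ [_ [_ [_ [_ [_ [_ H]]]]]]]]; exact: H. Qed.

Lemma skewP x y : pair (P x) y = - pair x (P y).
Proof. by case: HPQR => _ [_ [_ [H _]]]; exact: (pair_skew H PP). Qed.

Lemma skewQ x y : pair (Q x) y = - pair x (Q y).
Proof. by case: HPQR => _ [_ [_ [_ [H _]]]]; exact: (pair_skew H QQ). Qed.

Lemma skewR x y : pair (R x) y = - pair x (R y).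
Proof. by case: HPQR => _ [_ [_ [_ [_ [H _]]]]]; exact: (pair_skew H RR). Qed.

Lemma PQ x : P (Q x) = R x.
Proof. by have := PQR (R x); rewrite RR (Alin_opp Q_lin) (Alin_opp P_lin) => /oppr_inj. Qed.

Lemma QR x : Q (R x) = P x.
Proof.
have := congr1 P (RR x); rewrite -!PQ PP (Alin_opp P_lin) => /oppr_inj.
by rewrite PQ.
Qed.

Lemma QP x : Q (P x) = - R x.
Proof.
have := QR (Q x); rewrite -PQ QQ (Alin_opp P_lin) (Alin_opp Q_lin) PQ => <-.
by rewrite opprK.
Qed.

Lemma RQ x : R (Q x) = - P x.
Proof. by rewrite -PQ QQ (Alin_opp P_lin). Qed.

Lemma RP x : R (P x) = Q x.
Proof. by rewrite -PQ QP (Alin_opp P_lin) -PQ PP opprK. Qed.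

Lemma PR x : P (R x) = - Q x.
Proof. by rewrite -PQ PP. Qed.

Lemma almost_hypercomplex_cycle : almost_hypercomplex pair Q R P.
Proof.
case: HPQR => PL [QL [RL [Po [Qo [Ro _]]]]].
by repeat split => //; [exact: QQ | exact: RR | exact: PP | move=> x; rewrite RP QQ].
Qed.

Ltac hc_normalize :=
  rewrite ?(Alin_add P_lin) ?(Alin_add Q_lin) ?(Alin_add R_lin)
    ?(Alin_opp P_lin) ?(Alin_opp Q_lin) ?(Alin_opp R_lin)
    ?(Alin_scale P_lin) ?(Alin_scale Q_lin) ?(Alin_scale R_lin)
    ?PP ?QQ ?RR ?PQ ?QP ?QR ?RQ ?RP ?PR
    ?pair_oppl ?pair_oppr ?skewP ?skewQ ?skewR ?D_opp ?opprK
    ?dorf_addl ?dorf_addr ?dorf_oppl ?dorf_oppr ?dorf_scalel ?dorf_scaler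
    ?scalerN ?scaleNr ?scalerDr ?half_scaleC.

Ltac normalize := repeat progress hc_normalize.

Ltac normalize_at X Y :=
  repeat progress (hc_normalize;
    rewrite ?(pair_sym Y X) ?(pair_sym Y (P X)) ?(pair_sym Y (Q X)) ?(pair_sym Y (R X))).

Lemma dorf_of_torsion (nabla : E -> E -> E) :
  (forall X Y, torsion dorf nabla X Y = torsion_target pair D P Q R X Y) ->
  forall a b, dorf a b =
    nabla a b - nabla b a - torsion_target pair D P Q R a b + D (pair a b).
Proof.
move=> Ht a b; rewrite -Ht /torsion /courant_bracket (dorf_swap a b).
have -> : dorf a b - (- dorf a b + (D (pair a b) + D (pair a b))) =
          (dorf a b - D (pair a b)) + (dorf a b - D (pair a b)) by abelian.
by rewrite half_double; abelian.
Qed.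

(* Uniqueness: a P- and Q-parallel connection with the prescribed torsion is
   -1/2 R C_{P,Q}, because C_{P,Q}(X, Y) = 2 R nabla_X Y. *)
Lemma connection_unique (nabla : E -> E -> E) :
  parallel nabla P -> parallel nabla Q ->
  (forall X Y, torsion dorf nabla X Y = torsion_target pair D P Q R X Y) ->
  forall X Y, nabla X Y = conn_formula dorf P Q R X Y.
Proof.
move=> parP parQ Ht X Y.
have nP := parallel_commute parP; have nQ := parallel_commute parQ.
have dN := dorf_of_torsion Ht.
have bracket_nabla : mixed_bracket dorf P Q X Y = R (nabla X Y) + R (nabla X Y).
  rewrite /mixed_bracket (dN (Q Y) (P X)) (dN Y (P X)) (dN (Q Y) X) (dN Y X) !nP !nQ.
  rewrite /torsion_target; normalize_at X Y.
  abelian.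
rewrite conn_formulaE bracket_nabla (Alin_add R_lin) !RR -opprD.
by rewrite scaleNr scalerN opprK half_double.
Qed.

Lemma conn_formula_torsion X Y :
  R (torsion dorf (conn_formula dorf P Q R) X Y) =
  - (Defs.half A *: nijenhuis_concomitant dorf P Q X Y)
  + R (torsion_target pair D P Q R X Y).
Proof.
have antisym : mixed_bracket dorf P Q X Y - mixed_bracket dorf P Q Y X
      - R (dorf X Y - dorf Y X) =
    - nijenhuis_concomitant dorf P Q X Y +
    (R (torsion_target pair D P Q R X Y) + R (torsion_target pair D P Q R X Y)).
  rewrite /mixed_bracket /nijenhuis_concomitant /torsion_target.
  rewrite (dorf_swap (P X) (Q Y)) (dorf_swap (P X) Y) (dorf_swap X (Q Y)) (dorf_swap X Y).
  normalize_at X Y.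
  abelian.
rewrite /torsion /courant_bracket !conn_formulaE.
transitivity (Defs.half A *: (mixed_bracket dorf P Q X Y - mixed_bracket dorf P Q Y X
                              - R (dorf X Y - dorf Y X))).
  normalize.
  abelian.
by rewrite antisym scalerDr scalerN half_double.
Qed.

Lemma conn_formula_Klin_r X : Klin (conn_formula dorf P Q R X).
Proof.
by split => [Y1 Y2 | k Y]; rewrite !conn_formulaE /mixed_bracket; normalize; abelian.
Qed.

Lemma conn_formula_Klin_l Y : Klin (conn_formula dorf P Q R ^~ Y).
Proof.
by split => [X1 X2 | k X]; rewrite !conn_formulaE /mixed_bracket; normalize; abelian.
Qed.

Lemma conn_formula_scalel f X Y :
  conn_formula dorf P Q R (f *: X) Y = f *: conn_formula dorf P Q R X Y.
Proof.
rewrite !conn_formulaE /mixed_bracket.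
repeat progress (hc_normalize; rewrite ?dorf_leibniz).
abelian.
Qed.

(* The Leibniz rule in Y: the Delta term comes from the exact terms of the
   Leibniz rule for the Dorfman bracket in its first argument. *)
Lemma conn_formula_leibniz X f Y :
  conn_formula dorf P Q R X (f *: Y) =
  anchor X f *: Y + f *: conn_formula dorf P Q R X Y - Delta pair D P Q R f X Y.
Proof.
have bracket_scale : mixed_bracket dorf P Q X (f *: Y) = f *: mixed_bracket dorf P Q X Y +
    (R (anchor X f *: Y - Delta pair D P Q R f X Y)
     + R (anchor X f *: Y - Delta pair D P Q R f X Y)).
  rewrite /mixed_bracket /Delta.
  repeat progress (normalize_at X Y; rewrite ?dorf_leibniz_l).
  abelian.
rewrite !conn_formulaE bracket_scale.
set w := anchor X f *: Y - Delta pair D P Q R f X Y.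
rewrite (Alin_add R_lin) (Alin_scale R_lin) (Alin_add R_lin) !RR -opprD.
rewrite scalerDr !scaleNr scalerN !opprK half_double half_scaleC scalerN /w.
abelian.
Qed.

Lemma conn_formula_hypercomplex :
  hypercomplex_connection pair anchor D P Q R (conn_formula dorf P Q R).
Proof.
split; first exact: conn_formula_Klin_r.
split; first exact: conn_formula_Klin_l.
split; first exact: conn_formula_scalel.
exact: conn_formula_leibniz.
Qed.

Section VanishingNijenhuis.
Hypothesis HN : forall X Y, nijenhuis_concomitant dorf P Q X Y = 0.

Lemma mixed_bracket_swap X Y : mixed_bracket dorf P Q X Y = - mixed_bracket dorf Q P X Y.
Proof. by apply/eqP; rewrite -subr_eq0 opprK -nijenhuis_mixed HN. Qed.

Lemma conn_formula_parallel_P : parallel (conn_formula dorf P Q R) P.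
Proof.
move=> X Y; rewrite !conn_formulaE !mixed_bracket_swap (mixed_bracket_Sr Q_lin P_lin PP).
normalize.
abelian.
Qed.

Lemma conn_formula_parallel_Q : parallel (conn_formula dorf P Q R) Q.
Proof.
move=> X Y; rewrite !conn_formulaE (mixed_bracket_Sr P_lin Q_lin QQ).
normalize.
abelian.
Qed.

(* R = PQ is parallel as soon as P and Q are. *)
Lemma conn_formula_parallel_R : parallel (conn_formula dorf P Q R) R.
Proof.
move=> X Y; rewrite -!PQ (parallel_commute conn_formula_parallel_P).
by rewrite (parallel_commute conn_formula_parallel_Q) subrr.
Qed.

Lemma conn_formula_torsion_target X Y :
  torsion dorf (conn_formula dorf P Q R) X Y = torsion_target pair D P Q R X Y.
Proof.
have := conn_formula_torsion X Y; rewrite HN scaler0 oppr0 add0r => /(congr1 R).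
by rewrite !RR => /oppr_inj.
Qed.

Lemma conn_formula_good :
  good_connection pair anchor dorf D P Q R (conn_formula dorf P Q R).
Proof.
split; first exact: conn_formula_hypercomplex.
split; first exact: conn_formula_parallel_P.
split; first exact: conn_formula_parallel_Q.
split; first exact: conn_formula_parallel_R.
exact: conn_formula_torsion_target.
Qed.

End VanishingNijenhuis.

(* Necessity: a P- and Q-parallel connection with the prescribed torsion
   forces N_{P,Q} = 0, since it coincides with the candidate. *)
Lemma nijenhuis_vanishes (nabla : E -> E -> E) :
  parallel nabla P -> parallel nabla Q ->
  (forall X Y, torsion dorf nabla X Y = torsion_target pair D P Q R X Y) ->
  forall X Y, nijenhuis_concomitant dorf P Q X Y = 0.
Proof.
move=> parP parQ Ht X Y.
have same_torsion : torsion dorf (conn_formula dorf P Q R) X Y = torsion dorf nabla X Y.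
  by rewrite /torsion !(connection_unique parP parQ Ht).
have half_N : Defs.half A *: nijenhuis_concomitant dorf P Q X Y = 0.
  apply/eqP; rewrite -oppr_eq0; apply/eqP.
  apply: (addIr (R (torsion_target pair D P Q R X Y))).
  by rewrite -conn_formula_torsion same_torsion Ht add0r.
by rewrite -[LHS]half_double scalerDr half_N addr0.
Qed.

End HypercomplexTriple.
End CourantAlgebroid.
End ModulesOverA.

Theorem mainTheorem8 (K : realFieldType) (A : comAlgType K) (E : lmodType A)
  (pair : E -> E -> A) (anchor : E -> A -> A) (dorf : E -> E -> E) (D : A -> E)
  (HC : is_courant pair anchor dorf D)
  (I J Kk : E -> E) (HH : almost_hypercomplex pair I J Kk) :
  ((exists nabla, good_connection pair anchor dorf D I J Kk nabla) <->
     (forall X Y, nijenhuis_concomitant dorf I J X Y = 0)) /\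
  (forall nabla, good_connection pair anchor dorf D I J Kk nabla ->
     forall X Y,
       nabla X Y = conn_formula dorf I J Kk X Y /\
       nabla X Y = conn_formula dorf J Kk I X Y /\
       nabla X Y = conn_formula dorf Kk I J X Y).
Proof.
have HH' := almost_hypercomplex_cycle HH.
have HH'' := almost_hypercomplex_cycle HH'.
split.
  split => [[nabla [_ [parI [parJ [_ Ht]]]]] | HN].
    exact: (nijenhuis_vanishes HC HH parI parJ Ht).
  by exists (conn_formula dorf I J Kk); exact: conn_formula_good.
move=> nabla [_ [parI [parJ [parK Ht]]]] X Y.
have Ht' a b : torsion dorf nabla a b = torsion_target pair D J Kk I a b.
  by rewrite -torsion_target_cycle; exact: Ht.
have Ht'' a b : torsion dorf nabla a b = torsion_target pair D Kk I J a b.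
  by rewrite -torsion_target_cycle; exact: Ht'.
split; first exact: (connection_unique HC HH parI parJ Ht).
split; first exact: (connection_unique HC HH' parJ parK Ht').
exact: (connection_unique HC HH'' parK parI Ht'').
Qed.
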